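(* If $\otimes$ is the drastic minimum $T_d$ and $\oplus$ is a disjunctive uninorm, then $(\otimes,\oplus)$ satisfies the rearrangement inequality. If $\oplus$ is the drastic maximum $T_d'$ and $\otimes$ is a conjunctive uninorm, then $(\otimes,\oplus)$ satisfies the dual rearrangement inequality.
   Context: A uninorm is a function $\otimes:[0,1]^2\to[0,1]$ that is commutative, associative, monotonic ($x\leq y$ implies $x\otimes z\leq y\otimes z$), and has an identity element $e\in[0,1]$. A uninorm is conjunctive if $0\otimes 1=0$ and disjunctive if $0\otimes1=1$. The drastic minimum is $T_d(x,y)=\min(x,y)$ if $\max(x,y)=1$ and $0$ otherwise; the drastic maximum is $T_d'(x,y)=\max(x,y)$ if $\min(x,y)=0$ and $1$ otherwise. $(\otimes,\oplus)$ satisfies the rearrangement inequality if for every $n\geq1$, all $0\leq x_1\leq\cdots\leq x_n\leq 1$, $0\leq y_1\leq\cdots\leq y_n\leq 1$ and every permutation $\sigma$ of $\{1,\dots,n\}$, $$(x_n\otimes y_1)\oplus\cdots\oplus(x_1\otimes y_n)\leq (x_{\sigma(1)}\otimes y_1)\oplus\cdots\oplus(x_{\sigma(n)}\otimes y_n)\leq (x_1\otimes y_1)\oplus\cdots\oplus(x_n\otimes y_n),$$ and the dual rearrangement inequality if for all such data $$(x_n\oplus y_1)\otimes\cdots\otimes(x_1\oplus y_n)\geq (x_{\sigma(1)}\oplus y_1)\otimes\cdots\otimes(x_{\sigma(n)}\oplus y_n)\geq (x_1\oplus y_1)\otimes\cdots\otimes(x_n\oplus y_n).$$ *)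

From mathcomp Require Import all_boot all_order all_algebra.
From mathcomp Require Import all_fingroup.
From mathcomp Require Import reals.
Set Implicit Arguments. Unset Strict Implicit. Unset Printing Implicit Defensive.
Import Order.TTheory GRing.Theory Num.Theory.
Local Open Scope ring_scope.

Section Defs.
Variable R : realFieldType.

Definition unit_int (x : R) : bool := (0 <= x) && (x <= 1).

(* A uninorm on [0,1]: operation R -> R -> R, with the axioms required on [0,1]
   (values outside [0,1] are irrelevant). *)
Definition uninorm (op : R -> R -> R) : Prop :=
  (forall x y, unit_int x -> unit_int y -> unit_int (op x y)) /\
  (forall x y, unit_int x -> unit_int y -> op x y = op y x) /\
  (forall x y z, unit_int x -> unit_int y -> unit_int z ->
     op x (op y z) = op (op x y) z) /\
  (forall x y z, unit_int x -> unit_int y -> unit_int z ->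
     x <= y -> op x z <= op y z) /\
  (exists e, unit_int e /\ forall x, unit_int x -> op e x = x).

Definition conjunctive (op : R -> R -> R) : Prop := op 0 1 = 0.
Definition disjunctive (op : R -> R -> R) : Prop := op 0 1 = 1.

Definition drastic_min (x y : R) : R :=
  if Num.max x y == 1 then Num.min x y else 0.
Definition drastic_max (x y : R) : R :=
  if Num.min x y == 0 then Num.max x y else 1.

(* iterated operation  f 0 `op` f 1 `op` ... `op` f (n-1)  (left-bracketed;
   only used for n >= 1) *)
Definition iter_op (op : R -> R -> R) (n : nat) (f : nat -> R) : R :=
  foldl op (f 0%N) [seq f i | i <- iota 1 n.-1].

Definition sorted01 (n : nat) (x : 'I_n -> R) : Prop :=
  (forall i, unit_int (x i)) /\ (forall i j : 'I_n, (i <= j)%N -> x i <= x j).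

(* extend a function on 'I_n to nat (value 0 outside the range; never used) *)
Definition ext (n : nat) (x : 'I_n -> R) (i : nat) : R :=
  match insub i with Some j => x j | None => 0 end.

Definition rearrangement (otimes oplus : R -> R -> R) : Prop :=
  forall (n : nat) (x y : 'I_n -> R) (s : 'S_n), (0 < n)%N ->
    sorted01 x -> sorted01 y ->
    iter_op oplus n (fun i => otimes (ext x (n - 1 - i)%N) (ext y i))
      <= iter_op oplus n (fun i => otimes (ext (fun j => x (s j)) i) (ext y i))
    /\
    iter_op oplus n (fun i => otimes (ext (fun j => x (s j)) i) (ext y i))
      <= iter_op oplus n (fun i => otimes (ext x i) (ext y i)).

Definition dual_rearrangement (otimes oplus : R -> R -> R) : Prop :=
  forall (n : nat) (x y : 'I_n -> R) (s : 'S_n), (0 < n)%N ->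
    sorted01 x -> sorted01 y ->
    iter_op otimes n (fun i => oplus (ext (fun j => x (s j)) i) (ext y i))
      <= iter_op otimes n (fun i => oplus (ext x (n - 1 - i)%N) (ext y i))
    /\
    iter_op otimes n (fun i => oplus (ext x i) (ext y i))
      <= iter_op otimes n (fun i => oplus (ext (fun j => x (s j)) i) (ext y i)).

End Defs.

From HB Require Import structures.
From mathcomp Require Import all_boot all_order all_algebra all_fingroup.
From mathcomp Require Import reals.
Set Implicit Arguments. Unset Strict Implicit. Unset Printing Implicit Defensive.
Import Order.TTheory GRing.Theory Num.Theory.
Local Open Scope ring_scope.

(* On [0,1] the combining uninorm is a commutative monoid, so each side of the
   inequality is a big operator over the pairs (x_(s i), y_i), and exchanging the
   partners of two positions changes only two of its terms.  For the drastic
   minimum and a disjunctive uninorm (dually, the drastic maximum and a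
   conjunctive one) this two-term exchange inequality is a case analysis using
   only monotonicity and 0 (+) 1 = 1 (dually 0 (x) 1 = 0).  Exchanges that each
   move the value up sort any permutation into the identity, which gives the
   upper bound; the lower bound is the upper bound for the reversed sequence x
   under the opposite order, and the dual inequality is the whole argument for
   the opposite order. *)

Section Exchange.
Variables (T : Type) (idx : T) (op : Monoid.com_law idx) (le : rel T).
Hypotheses (le_refl : reflexive le) (le_trans : transitive le).
Hypothesis le_opl : forall a b c, le a b -> le (op a c) (op b c).
Variables (n : nat) (F : 'I_n -> 'I_n -> T).
Hypothesis F_exchange : forall j1 j2 i1 i2 : 'I_n, (j1 <= j2)%N -> (i1 <= i2)%N ->
  le (op (F j2 i1) (F j1 i2)) (op (F j1 i1) (F j2 i2)).

Definition pairing (s : 'S_n) : T := \big[op/idx]_(i < n) F (s i) i.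

Lemma pairing_tperm (s : 'S_n) (k j : 'I_n) : (k <= j)%N -> (s j <= s k)%N ->
  le (pairing s) (pairing (tperm k j * s)%g).
Proof.
move=> le_kj le_sjk; have [<-|neq_kj] := eqVneq k j; first by rewrite tperm1 mul1g.
have pairingE t : pairing t =
    op (op (F (t k) k) (F (t j) j)) (\big[op/idx]_(i | (i != k) && (i != j)) F (t i) i).
  by rewrite /pairing (bigD1 k) // (bigD1 j) 1?eq_sym //= Monoid.mulmA.
have pairing_rest : \big[op/idx]_(i | (i != k) && (i != j)) F ((tperm k j * s)%g i) i =
                    \big[op/idx]_(i | (i != k) && (i != j)) F (s i) i.
  by apply: eq_bigr => i /andP[ik ij]; rewrite permM tpermD // eq_sym.
rewrite !pairingE pairing_rest !permM tpermL tpermR.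
exact/le_opl/F_exchange.
Qed.

Lemma pairing_le_id_fixed_tail m (s : 'S_n) :
  (forall i : 'I_n, (m <= i)%N -> s i = i) -> le (pairing s) (pairing 1).
Proof.
elim: m s => [|m IH] s fix_s.
  by have -> : s = 1%g by apply/permP => i; rewrite perm1 fix_s.
have [lt_mn|le_nm] := ltnP m n; last first.
  by apply: IH => i; rewrite leqNgt (leq_trans (ltn_ord i) le_nm).
pose j := Ordinal lt_mn; pose k := (s^-1)%g j.
have s_k : s k = j by rewrite permKV.
have le_kj : (k <= j)%N.
  rewrite leqNgt; apply/negP => lt_jk.
  by move: (lt_jk); rewrite -(fix_s _ lt_jk) s_k ltnn.
have le_sj : (s j <= j)%N.
  rewrite leqNgt; apply/negP => lt_jsj.
  by move: (lt_jsj); rewrite (perm_inj (fix_s _ lt_jsj)) ltnn.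
apply: le_trans (pairing_tperm le_kj _) (IH _ _); first by rewrite s_k.
move=> i le_mi; rewrite permM.
have [->|neq_ij] := eqVneq i j; first by rewrite tpermR.
have lt_ji : (j < i)%N by rewrite ltn_neqAle le_mi andbT eq_sym.
have lt_ki : (k < i)%N := leq_ltn_trans le_kj lt_ji.
by rewrite tpermD -?val_eqE ?ltn_eqF ?fix_s.
Qed.

Lemma pairing_le_id (s : 'S_n) : le (pairing s) (pairing 1).
Proof. by apply: (@pairing_le_id_fixed_tail n) => i; rewrite leqNgt ltn_ord. Qed.

End Exchange.

Definition rev_perm n : 'S_n := perm (@rev_ord_inj n).

Lemma pairing_rev_le (T : Type) (idx : T) (op : Monoid.com_law idx) (le : rel T) :
  reflexive le -> transitive le -> (forall a b c, le a b -> le (op a c) (op b c)) ->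
  forall n (F : 'I_n -> 'I_n -> T),
  (forall j1 j2 i1 i2 : 'I_n, (j1 <= j2)%N -> (i1 <= i2)%N ->
     le (op (F j2 i1) (F j1 i2)) (op (F j1 i1) (F j2 i2))) ->
  forall s : 'S_n, le (pairing op F (rev_perm n)) (pairing op F s).
Proof.
move=> le_refl le_trans le_opl n F F_exchange s.
pose F_rev j i := F (rev_ord j) i.
have F_rev_exchange (j1 j2 i1 i2 : 'I_n) : (j1 <= j2)%N -> (i1 <= i2)%N ->
    le (op (F_rev j1 i1) (F_rev j2 i2)) (op (F_rev j2 i1) (F_rev j1 i2)).
  by move=> le_j le_i; apply: F_exchange; rewrite //= leq_sub2l // ltnS.
have -> : pairing op F s = pairing op F_rev (s * rev_perm n)%g.
  by apply: eq_bigr => i _; rewrite /F_rev permM permE rev_ordK.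
have -> : pairing op F (rev_perm n) = pairing op F_rev 1.
  by apply: eq_bigr => i _; rewrite /F_rev perm1 permE.
apply: (pairing_le_id (le := fun a b => le b a)) F_rev_exchange _ => //.
  by move=> b a c /= le_ab le_bc; apply: le_trans le_ab.
by move=> a b c; apply: le_opl.
Qed.

Lemma ext_ord (R : realFieldType) n (x : 'I_n -> R) (i : 'I_n) : ext x i = x i.
Proof. by rewrite /ext valK. Qed.

Lemma ext_rev (R : realFieldType) n (x : 'I_n -> R) (i : 'I_n) :
  ext x (n - 1 - i) = x (rev_perm n i).
Proof. by rewrite permE -ext_ord /= -subnDA. Qed.

Section UnitIntervalMonoid.
Variables (R : realFieldType) (op : R -> R -> R) (e : R).
Hypothesis e01 : unit_int e.
Hypothesis op01 : forall x y, unit_int x -> unit_int y -> unit_int (op x y).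
Hypothesis opC : forall x y, unit_int x -> unit_int y -> op x y = op y x.
Hypothesis opA : forall x y z, unit_int x -> unit_int y -> unit_int z ->
  op x (op y z) = op (op x y) z.
Hypothesis op_id : forall x, unit_int x -> op e x = x.

Definition unit_interval := {x : R | unit_int x}.

Definition unit_op (a b : unit_interval) : unit_interval :=
  exist _ (op (val a) (val b)) (op01 (valP a) (valP b)).
Definition unit_e : unit_interval := exist _ e e01.

Lemma unit_opA : associative unit_op.
Proof. by move=> a b c; apply: val_inj; apply: opA; apply: valP. Qed.
Lemma unit_opC : commutative unit_op.
Proof. by move=> a b; apply: val_inj; apply: opC; apply: valP. Qed.
Lemma unit_op1m : left_id unit_e unit_op.
Proof. by move=> a; apply: val_inj; apply: op_id; apply: valP. Qed.
HB.instance Definition _ :=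
  Monoid.isComLaw.Build unit_interval unit_e unit_op unit_opA unit_opC unit_op1m.

Lemma foldl_op_big (a : unit_interval) (s : seq unit_interval) :
  foldl op (val a) (map val s) = val (\big[unit_op/unit_e]_(b <- a :: s) b).
Proof.
elim: s a => [|b s IH] a /=; first by rewrite big_seq1.
by rewrite -[op _ _]/(val (unit_op a b)) IH !big_cons Monoid.mulmA.
Qed.

Lemma iter_op_big n (f : nat -> R) : (0 < n)%N -> (forall i, (i < n)%N -> unit_int (f i)) ->
  iter_op op n f = val (\big[unit_op/unit_e]_(i < n) insubd unit_e (f i)).
Proof.
case: n => // n _ f01; pose g i := insubd unit_e (f i).
have g_val i : (i < n.+1)%N -> val (g i) = f i by move/f01; apply: insubdK.
rewrite -(big_mkord xpredT g) /index_iota subn0 -[iota 0 n.+1]/(0 :: iota 1 n).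
rewrite -(big_map g xpredT id).
rewrite -foldl_op_big g_val // /iter_op -map_comp; congr foldl.
by apply/esym/eq_in_map => i; rewrite mem_iota add1n => /andP[_]; apply: g_val.
Qed.

Variables (pr : R -> R -> R) (le : rel R).
Hypotheses (le_refl : reflexive le) (le_trans : transitive le).
Hypothesis op_le : forall a b c, unit_int a -> unit_int b -> unit_int c ->
  le a b -> le (op a c) (op b c).
Hypothesis pr01 : forall a c, unit_int a -> unit_int c -> unit_int (pr a c).
Hypothesis pr_exchange : forall a b c d,
  unit_int a -> unit_int b -> unit_int c -> unit_int d -> b <= a -> c <= d ->
  le (op (pr a c) (pr b d)) (op (pr b c) (pr a d)).

Lemma iter_op_rearrangement n (x y : 'I_n -> R) (s : 'S_n) :
  (0 < n)%N -> sorted01 x -> sorted01 y ->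
  le (iter_op op n (fun i => pr (ext x (n - 1 - i)) (ext y i)))
     (iter_op op n (fun i => pr (ext (fun j => x (s j)) i) (ext y i))) /\
  le (iter_op op n (fun i => pr (ext (fun j => x (s j)) i) (ext y i)))
     (iter_op op n (fun i => pr (ext x i) (ext y i))).
Proof.
move=> n_gt0 [x01 x_sorted] [y01 y_sorted].
pose F j i := insubd unit_e (pr (x j) (y i)).
have iter_opE (p : 'S_n) (g : nat -> R) : (forall i : 'I_n, g i = x (p i)) ->
    iter_op op n (fun i => pr (g i) (ext y i)) = val (pairing unit_op F p).
  move=> gE; rewrite iter_op_big //; last first.
    by move=> i lt_in; rewrite -[i]/(nat_of_ord (Ordinal lt_in)) gE ext_ord; apply: pr01.
  by congr val; apply: eq_bigr => i _; rewrite gE ext_ord.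
rewrite (iter_opE (rev_perm n) (fun i => ext x (n - 1 - i))) => [|i]; last exact: ext_rev.
rewrite (iter_opE s (ext (fun j => x (s j)))) => [|i]; last exact: ext_ord.
rewrite (iter_opE 1%g (ext x)) => [|i]; last by rewrite ext_ord perm1.
pose le_val (a b : unit_interval) := le (val a) (val b).
have le_val_refl : reflexive le_val by move=> a; apply: le_refl.
have le_val_trans : transitive le_val by move=> b a c; apply: le_trans.
have le_val_op a b c : le_val a b -> le_val (unit_op a c) (unit_op b c).
  by apply: op_le; apply: valP.
have F_exchange (j1 j2 i1 i2 : 'I_n) : (j1 <= j2)%N -> (i1 <= i2)%N ->
    le_val (unit_op (F j2 i1) (F j1 i2)) (unit_op (F j1 i1) (F j2 i2)).
  move=> le_j le_i; rewrite /le_val /= !insubdK; try exact: pr01 (x01 _) (y01 _).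
  by apply: pr_exchange; rewrite ?x_sorted ?y_sorted.
split; first exact: (pairing_rev_le le_val_refl le_val_trans le_val_op F_exchange s).
exact: (pairing_le_id le_val_refl le_val_trans le_val_op F_exchange s).
Qed.

End UnitIntervalMonoid.

Section Drastic.
Variable R : realFieldType.
Implicit Types a b c d : R.

Lemma unit_int0 : unit_int (0 : R). Proof. by rewrite /unit_int lexx ler01. Qed.
Lemma unit_int1 : unit_int (1 : R). Proof. by rewrite /unit_int lexx ler01. Qed.

Lemma drastic_minE a c : unit_int a -> unit_int c ->
  drastic_min a c = if a == 1 then c else if c == 1 then a else 0.
Proof.
move=> /andP[_ a_le1] /andP[_ c_le1]; rewrite /drastic_min.
have [->|a_neq1] := eqVneq a 1; first by rewrite (max_l c_le1) eqxx (min_r c_le1).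
have [->|c_neq1] := eqVneq c 1; first by rewrite (max_r a_le1) eqxx (min_l a_le1).
by case: leP => _; rewrite ?(negbTE a_neq1) ?(negbTE c_neq1).
Qed.

Lemma drastic_maxE a c : unit_int a -> unit_int c ->
  drastic_max a c = if a == 0 then c else if c == 0 then a else 1.
Proof.
move=> /andP[a_ge0 _] /andP[c_ge0 _]; rewrite /drastic_max.
have [->|a_neq0] := eqVneq a 0; first by rewrite (min_l c_ge0) eqxx (max_r c_ge0).
have [->|c_neq0] := eqVneq c 0; first by rewrite (min_r a_ge0) eqxx (max_l a_ge0).
by case: leP => _; rewrite ?(negbTE a_neq0) ?(negbTE c_neq0).
Qed.

Lemma drastic_min01 a c : unit_int a -> unit_int c -> unit_int (drastic_min a c).
Proof. by move=> a01 c01; rewrite drastic_minE //; do 2?case: ifP => _ //; apply: unit_int0. Qed.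

Lemma drastic_max01 a c : unit_int a -> unit_int c -> unit_int (drastic_max a c).
Proof. by move=> a01 c01; rewrite drastic_maxE //; do 2?case: ifP => _ //; apply: unit_int1. Qed.

Lemma uninorm_monor (U : R -> R -> R) : uninorm U -> forall a b c,
  unit_int a -> unit_int b -> unit_int c -> b <= c -> U a b <= U a c.
Proof.
by case=> [_ [UC [_ [U_mono _]]]] a b c a01 b01 c01 le_bc; rewrite !(UC a) //; apply: U_mono.
Qed.

Lemma drastic_min_exchange (U : R -> R -> R) : uninorm U -> disjunctive U ->
  forall a b c d, unit_int a -> unit_int b -> unit_int c -> unit_int d ->
  b <= a -> c <= d ->
  U (drastic_min a c) (drastic_min b d) <= U (drastic_min b c) (drastic_min a d).
Proof.
move=> U_uni U_disj a b c d a01 b01 c01 d01 le_ba le_cd.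
have [U01 [UC _]] := U_uni.
have [<-|neq_ba] := eqVneq b a; first by [].
have [<-|neq_cd] := eqVneq c d; first by rewrite UC // drastic_min01.
have b_lt1 : b < 1 by rewrite (lt_le_trans _ (andP a01).2) // lt_neqAle neq_ba.
have c_lt1 : c < 1 by rewrite (lt_le_trans _ (andP d01).2) // lt_neqAle neq_cd.
rewrite !drastic_minE // (lt_eqF b_lt1) (lt_eqF c_lt1).
case: eqVneq => _; case: eqVneq => [d1|_] /=.
- by rewrite d1 U_disj; case/andP: (U01 c b c01 b01).
- by rewrite UC ?unit_int0 // (uninorm_monor U_uni) ?unit_int0.
- by rewrite (uninorm_monor U_uni) ?unit_int0.
- by [].
Qed.

Lemma drastic_max_exchange (U : R -> R -> R) : uninorm U -> conjunctive U ->
  forall a b c d, unit_int a -> unit_int b -> unit_int c -> unit_int d ->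
  b <= a -> c <= d ->
  U (drastic_max b c) (drastic_max a d) <= U (drastic_max a c) (drastic_max b d).
Proof.
move=> U_uni U_conj a b c d a01 b01 c01 d01 le_ba le_cd.
have [U01 [UC [_ [U_mono _]]]] := U_uni.
have [<-|neq_ba] := eqVneq b a; first by [].
have [<-|neq_cd] := eqVneq c d; first by rewrite UC // drastic_max01.
have a_gt0 : 0 < a by rewrite (le_lt_trans (andP b01).1) // lt_neqAle neq_ba.
have d_gt0 : 0 < d by rewrite (le_lt_trans (andP c01).1) // lt_neqAle neq_cd.
rewrite !drastic_maxE // (gt_eqF a_gt0) (gt_eqF d_gt0).
case: eqVneq => _; case: eqVneq => [c0|_] /=.
- by rewrite c0 U_conj; case/andP: (U01 a d a01 d01).
- by rewrite UC ?unit_int1 // (uninorm_monor U_uni) ?unit_int1.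
- by rewrite U_mono ?unit_int1.
- by [].
Qed.

End Drastic.

Theorem theorem11 (R : realType) :
  (forall oplus : R -> R -> R, uninorm oplus -> disjunctive oplus ->
     rearrangement (@drastic_min R) oplus) /\
  (forall otimes : R -> R -> R, uninorm otimes -> conjunctive otimes ->
     dual_rearrangement otimes (@drastic_max R)).
Proof.
split=> op op_uni op_0_1; have [op01 [opC [opA [op_mono [e [e01 op_id]]]]]] := op_uni.
- apply: (iter_op_rearrangement e01 op01 opC opA op_id (le := <=%R) lexx le_trans op_mono).
    exact: drastic_min01.
  exact: drastic_min_exchange.
- have ge_trans : transitive (>=%R : rel R).
    by move=> b a c /= le_ba le_cb; apply: le_trans le_ba.
  apply: (iter_op_rearrangement e01 op01 opC opA op_id (le := >=%R) lexx ge_trans).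
  + by move=> a b c a01 b01 c01; apply: op_mono.
  + exact: drastic_max01.
  + exact: drastic_max_exchange.
Qed.
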